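(* Let $R$ be a generalized Rickart $*$-ring and let $B$ be a $*$-subring of $R$ such that $B=B''$. Then (1) if $x\in B$, then $GRP(x)\in B$ (where $GRP(x)$ is a generalized right projection of $x$ in $R$); and (2) $B$ is a generalized Rickart $*$-ring.
   Context: A $*$-ring is an associative ring $R$ with an involution $x\mapsto x^*$ (additive, $(xy)^*=y^*x^*$, $x^{**}=x$); a $*$-subring is a subring closed under $*$. A projection is an element $e$ with $e=e^*=e^2$. For a nonempty $S\subseteq R$, the commutant is $S'=\{x\in R: xs=sx \text{ for all } s\in S\}$ and $S''=(S')'$. For $a$ in a ring $T$, $r(a)=\{b\in T: ab=0\}$. A $*$-ring $T$ is a generalized Rickart $*$-ring if for every $x\in T$ there exist a positive integer $n$ and a projection $g\in T$ with $r(x^n)=gT$. A projection $e\in R$ is a generalized right projection of $x\in R$, written $GRP(x)=e$, if there exists $n\in\mathbb N$ with $x^ne=x^n$ and, for all $y\in R$, $x^ny=0$ implies $ey=0$. *)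

From mathcomp Require Import all_boot all_algebra.
Set Implicit Arguments. Unset Strict Implicit. Unset Printing Implicit Defensive.
Import GRing.Theory.
Local Open Scope ring_scope.

Definition involution (R : pzRingType) (s : R -> R) : Prop :=
  [/\ forall x y, s (x + y) = s x + s y,
      forall x y, s (x * y) = s y * s x &
      forall x, s (s x) = x].

Definition star_subring (R : pzRingType) (s : R -> R) (B : R -> Prop) : Prop :=
  [/\ B 0, forall x y, B x -> B y -> B (x - y),
      forall x y, B x -> B y -> B (x * y) &
      forall x, B x -> B (s x)].

Definition projection (R : pzRingType) (s : R -> R) (e : R) : Prop :=
  e = s e /\ e * e = e.

Definition commutant (R : pzRingType) (S : R -> Prop) : R -> Prop :=
  fun x => forall y, S y -> x * y = y * x.

(* The *-subring T (as a subset of R, with the restricted operations) is a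
   generalized Rickart *-ring: for every x in T there exist n >= 1 and a
   projection g in T with r_T(x^n) = {b in T | x^n b = 0} = g T. *)
Definition gen_rickart (R : pzRingType) (s : R -> R) (T : R -> Prop) : Prop :=
  forall x, T x -> exists n : nat, exists g : R,
    [/\ (0 < n)%N, T g, projection s g &
        forall y, (T y /\ x ^+ n * y = 0) <-> (exists2 b, T b & y = g * b)].

Definition GRP (R : pzRingType) (s : R -> R) (x e : R) : Prop :=
  projection s e /\
  exists n : nat, [/\ (0 < n)%N, x ^+ n * e = x ^+ n &
                      forall y, x ^+ n * y = 0 -> e * y = 0].

From mathcomp Require Import all_boot all_algebra.
Set Implicit Arguments. Unset Strict Implicit. Unset Printing Implicit Defensive.
Import GRing.Theory.
Local Open Scope ring_scope.

(* If e = GRP(x), then r(x^n) = (1 - e)R, so every z commuting with x satisfies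
   e z (1 - e) = 0.  When z ranges over the *-closed set B' this gives both
   e z = e z e and z e = e z e, hence e is in B''.  For (2), a generalized
   Rickart projection g of x in R yields GRP(x) = 1 - g, so g lies in B by (1),
   and the annihilator of x^n inside B is then gB. *)

Section StarRing.

Variables (R : pzRingType) (s : R -> R).
Hypothesis s_inv : involution s.

Lemma involution0 : s 0 = 0.
Proof.
case: s_inv => sD _ _.
by apply: (@addrI _ (s 0)); rewrite -sD !addr0.
Qed.

Lemma involutionN (y : R) : s (- y) = - s y.
Proof.
case: s_inv => sD _ _.
by apply/eqP; rewrite -subr_eq0 opprK -sD addNr involution0.
Qed.

Lemma involution1 : s 1 = 1.
Proof.
case: s_inv => _ sM sK.
by have := sM (s 1) 1; rewrite sK mulr1 sK => <-.
Qed.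

Lemma projection_subr1 (g : R) : projection s g -> projection s (1 - g).
Proof.
case: s_inv => sD _ _ [sg gg]; split.
  by rewrite sD involutionN involution1 -sg.
by rewrite mulrBr mulr1 !mulrBl gg mul1r subrr subr0.
Qed.

Lemma commutant_star (S : R -> Prop) (z : R) :
  (forall y, S y -> S (s y)) -> commutant S z -> commutant S (s z).
Proof.
case: s_inv => _ sM sK SS Sz y Sy.
by rewrite -[y]sK -!sM Sz ?sK //; apply: SS.
Qed.

Lemma GRP_corner_comm (x e z : R) :
  GRP s x e -> GRing.comm z x -> e * z = e * z * e.
Proof.
move=> [_ [n [_ xe xann]]] zx.
have zxn : GRing.comm z (x ^+ n) by apply: commrX.
have : x ^+ n * (z * (1 - e)) = 0.
  by rewrite mulrA -zxn -mulrA mulrBr mulr1 xe subrr mulr0.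
by move/xann/eqP; rewrite mulrBr mulr1 mulrBr mulrA subr_eq0 => /eqP.
Qed.

Lemma GRP_bicommutant (S : R -> Prop) (x e : R) :
  (forall y, S y -> S (s y)) -> S x -> GRP s x e ->
  commutant (commutant S) e.
Proof.
move=> SS Sx xe z Sz.
case: (s_inv) (xe) => _ sM sK [[se _] _].
have ez := GRP_corner_comm xe (Sz x Sx).
have ezs := GRP_corner_comm xe (commutant_star SS Sz Sx).
have ze : z * e = e * z * e.
  by rewrite -[z * e]sK sM -se ezs !sM sK -se mulrA.
by rewrite ze -ez.
Qed.

Lemma right_annihilator_idemP (T : R -> Prop) (a g : R) :
  (forall y z, T y -> T z -> T (y * z)) -> T g -> g * g = g ->
  (forall y, (T y /\ a * y = 0) <-> exists2 b, T b & y = g * b) <->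
  a * g = 0 /\ (forall y, T y -> a * y = 0 -> g * y = y).
Proof.
move=> TM Tg gg; split=> [ann | [ag gy] y].
  split=> [|y Ty ay].
    by have [] : T g /\ a * g = 0 by apply/(ann g); exists g; rewrite ?gg.
  by have [b _ ->] := (ann y).1 (conj Ty ay); rewrite mulrA gg.
split=> [[Ty ay] | [b Tb ->]]; first by exists y; rewrite ?gy.
by split; [apply: TM | rewrite mulrA ag mul0r].
Qed.

Lemma GRP_subr1 (x g : R) (n : nat) :
  (0 < n)%N -> projection s g -> x ^+ n * g = 0 ->
  (forall y, x ^+ n * y = 0 -> g * y = y) -> GRP s x (1 - g).
Proof.
move=> n0 pg xg gy; split; first exact: projection_subr1.
exists n; split=> // [|y /gy gyy]; first by rewrite mulrBr mulr1 xg subr0.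
by rewrite mulrBl mul1r gyy subrr.
Qed.

End StarRing.

Theorem mainTheorem5 (R : pzRingType) (s : R -> R) (B : R -> Prop) :
  involution s ->
  gen_rickart s (fun _ => True) ->
  star_subring s B ->
  (forall x, B x <-> commutant (commutant B) x) ->
  (forall x e, B x -> GRP s x e -> B e) /\ gen_rickart s B.
Proof.
move=> s_inv rickR [_ BB BM BS] BE.
have GRP_B x e : B x -> GRP s x e -> B e.
  by move=> Bx xe; apply/BE/(GRP_bicommutant s_inv BS Bx xe).
split=> // x Bx.
have [n [g [n0 _ [sg gg] annR]]] := rickR x I.
have [xg gy] := (right_annihilator_idemP (x ^+ n) (fun _ _ _ _ => I) I gg).1 annR.
have B1 : B 1 by apply/BE => y _; rewrite mul1r mulr1.
have Bg : B g.
  have B1g : B (1 - g).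
    by apply: (GRP_B x) => //; apply: (GRP_subr1 s_inv n0) => // y; apply: gy.
  by have := BB _ _ B1 B1g; rewrite subKr.
exists n, g; split=> //; apply/right_annihilator_idemP => //.
by split=> // y _; apply: gy.
Qed.
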